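(* An abelian group is almost divisible if and only if it is the direct sum of a divisible group and a bounded group. In particular, every almost divisible abelian group is algebraically compact.
   Context: For a prime $p$, the $p$-length $l_p(A)$ of an abelian group $A$ is the smallest ordinal $\lambda$ such that $p^\lambda A$ is $p$-divisible, where $p^0A=A$, $p^{\alpha+1}A=p(p^\alpha A)$ and $p^\alpha A=\bigcap_{\beta<\alpha}p^\beta A$ for limit $\alpha$. An abelian group $A$ is called almost divisible if $l_p(A)=0$ for all but finitely many primes $p$ and $l_p(A)<\omega$ for every prime $p$. A group is bounded if $mA=0$ for some integer $m\ge1$. *)

From HB Require Import structures.
From mathcomp Require Import all_boot all_order all_algebra.
From Stdlib Require List.
Set Implicit Arguments. Unset Strict Implicit. Unset Printing Implicit Defensive.
Import GRing.Theory.
Local Open Scope ring_scope.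

Definition p_divisible (A : zmodType) (p : nat) : Prop :=
  forall a : A, exists b : A, a = b *+ p.

(* p^n A (n finite) is p-divisible: every element of p^n A is p times an
   element of p^n A. *)
Definition pn_part_p_divisible (A : zmodType) (p n : nat) : Prop :=
  forall a : A, exists b : A, a *+ (p ^ n) = (b *+ (p ^ n)) *+ p.

(* l_p(A) < omega  <->  p^n A is p-divisible for some finite n. *)
Definition finite_p_length (A : zmodType) (p : nat) : Prop :=
  exists n : nat, pn_part_p_divisible A p n.

(* l_p(A) = 0  <->  A is p-divisible. *)
Definition almost_divisible (A : zmodType) : Prop :=
  (exists s : seq nat, forall p : nat, prime p -> ~ p_divisible A p -> p \in s)
  /\ (forall p : nat, prime p -> finite_p_length A p).

Definition divisible (A : zmodType) : Prop :=
  forall (a : A) (n : nat), (0 < n)%N -> exists b : A, a = b *+ n.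

Definition bounded (A : zmodType) : Prop :=
  exists m : nat, (1 <= m)%N /\ forall a : A, a *+ m = 0.

Definition subgroup (A : zmodType) (S : A -> Prop) : Prop :=
  S 0 /\ (forall x y, S x -> S y -> S (x - y)).

Definition divisible_plus_bounded (A : zmodType) : Prop :=
  exists (D B : A -> Prop),
    subgroup D /\ subgroup B /\
    (forall d (n : nat), D d -> (0 < n)%N -> exists e, D e /\ d = e *+ n) /\
    (exists m : nat, (1 <= m)%N /\ forall b, B b -> b *+ m = 0) /\
    (forall x, D x -> B x -> x = 0) /\
    (forall a : A, exists d b, D d /\ B b /\ a = d + b).

(* Algebraic compactness (Fuchs): every system of linear equations
     sum_j n_ij x_j = a_i   (i in I),
   each equation involving finitely many unknowns x_j (j in J), which is
   finitely solvable in A, is solvable in A.  Row i is given as a finite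
   list of (unknown, integer coefficient) pairs. *)
Definition eq_holds (A : zmodType) (J : Type)
    (row : seq (J * int)) (rhs : A) (x : J -> A) : Prop :=
  \sum_(c <- row) (x c.1 *~ c.2) = rhs.

Definition algebraically_compact (A : zmodType) : Prop :=
  forall (I J : Type) (rows : I -> seq (J * int)) (rhs : I -> A),
    (forall F : seq I, exists x : J -> A,
        forall i, List.In i F -> eq_holds (rows i) (rhs i) x) ->
    exists x : J -> A, forall i : I, eq_holds (rows i) (rhs i) x.

(* If A is the direct sum of a divisible D and a B with m B = 0, then p^(logn p m) A is
   p-divisible for every prime p, and A itself is p-divisible when p does not divide m.
   Conversely, if A is almost divisible, the subgroup mA is divisible for a suitable m;
   a divisible subgroup is a direct summand (Zorn), and its complement is killed by m.
   For algebraic compactness of D + B, by Zorn it suffices to extend a finitely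
   solvable system by a value of a single unknown x_j.  Its finite subsystems force
   conditions "d divides k x_j + e", and by the Smith normal form a finite system is
   solvable as soon as these conditions are consistent.  A finitely consistent family
   of such conditions has a common solution in D + B: in D the equations (d = 0) are
   all multiples of one with minimal |k|, and in B a condition only depends on
   k mod m and gcd(d, m), so finitely many representatives suffice. *)

From mathcomp Require Import all_boot all_order all_algebra.
From mathcomp Require Import boolp classical_sets.
Set Implicit Arguments. Unset Strict Implicit. Unset Printing Implicit Defensive.
Import Order.TTheory GRing.Theory Num.Theory.
Local Open Scope ring_scope.

Section Subgroup.
Variables (A : zmodType) (S : A -> Prop).
Hypothesis sS : subgroup S.

Lemma subgroup0 : S 0. Proof. by case: sS. Qed.

Lemma subgroupB x y : S x -> S y -> S (x - y). Proof. by case: sS => _; apply. Qed.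

Lemma subgroupN x : S x -> S (- x).
Proof. by move=> Sx; rewrite -sub0r; apply: subgroupB => //; apply: subgroup0. Qed.

Lemma subgroupD x y : S x -> S y -> S (x + y).
Proof. by move=> Sx Sy; rewrite -[y]opprK; apply: subgroupB => //; apply: subgroupN. Qed.

Lemma subgroupMn x n : S x -> S (x *+ n).
Proof.
move=> Sx; elim: n => [|n IHn]; first by rewrite mulr0n; apply: subgroup0.
by rewrite mulrS; apply: subgroupD.
Qed.

Lemma subgroupMz x k : S x -> S (x *~ k).
Proof.
by move=> Sx; case: k => n; rewrite ?NegzE ?mulrNz; do ?apply: subgroupN; apply: subgroupMn.
Qed.

End Subgroup.

Definition divisible_within (A : zmodType) (D : A -> Prop) : Prop :=
  forall d (n : nat), D d -> (0 < n)%N -> exists e, D e /\ d = e *+ n.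

Definition divisible_by (A : zmodType) (d : nat) (y : A) : Prop :=
  exists z, y = z *+ d.

Lemma divisible_byD (A : zmodType) d (x y : A) :
  divisible_by d x -> divisible_by d y -> divisible_by d (x + y).
Proof. by move=> [z ->] [w ->]; exists (z + w); rewrite mulrnDl. Qed.

Lemma divisible_byN (A : zmodType) d (x : A) :
  divisible_by d x -> divisible_by d (- x).
Proof. by move=> [z ->]; exists (- z); rewrite mulNrn. Qed.

Lemma coprime_Bezoutz (p m : nat) : coprime p m ->
  exists u v : int, u * p%:Z + v * m%:Z = 1.
Proof.
move=> /eqP cop; have [u [v E]] := Bezoutz p m.
by exists u, v; rewrite E /gcdz /= cop.
Qed.

Lemma torsion_pn_part_divisible (A : zmodType) (b : A) (m p : nat) :
  prime p -> (0 < m)%N -> b *+ m = 0 ->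
  exists c, b *+ p ^ logn p m = c *+ p ^ logn p m *+ p.
Proof.
move=> pp m_gt0 bm; have [m' cop Em] := pfactor_coprime pp m_gt0.
have [u [v Euv]] := coprime_Bezoutz cop.
exists (b *~ u); rewrite -{1}(mulr1z b) -Euv mulrzDr mulrnDl.
have -> : b *~ (v * m'%:Z) *+ p ^ logn p m = 0.
  by rewrite pmulrn -mulrzA -mulrA -PoszM -Em mulrC mulrzA -pmulrn bm mul0rz.
by rewrite addr0 mulrzA -pmulrn -!mulrnA mulnC.
Qed.

Lemma almost_divisible_of_divisible_plus_bounded (A : zmodType) :
  divisible_plus_bounded A -> almost_divisible A.
Proof.
move=> [D [B [_ [_ [divD [[m [m_gt0 bB]] [_ dec]]]]]]].
have pn_div p : prime p -> pn_part_p_divisible A p (logn p m).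
  move=> pp a; have [d [b [Dd [Bb ->]]]] := dec a.
  have [e [De ->]] := divD d p Dd (prime_gt0 pp).
  have [c Ec] := torsion_pn_part_divisible pp m_gt0 (bB b Bb).
  by exists (e + c); rewrite !mulrnDl Ec -!mulrnA mulnC.
split; last by move=> p pp; exists (logn p m); apply: pn_div.
exists (primes m) => p pp ndiv; apply/negPn/negP => pm; apply: ndiv => a.
have [b] := pn_div p pp a.
have -> : logn p m = 0%N by apply/eqP; rewrite -leqn0 leqNgt logn_gt0.
by rewrite expn0 !mulr1n => ->; exists b.
Qed.

Lemma divisible_within_of_prime (A : zmodType) (D : A -> Prop) :
  (forall q d, prime q -> D d -> exists e, D e /\ d = e *+ q) ->
  divisible_within D.
Proof.
move=> divq d n; elim/ltn_ind: n d => n IHn d Dd n_gt0.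
have [n_le1|n_gt1] := leqP n 1.
  by exists d; rewrite (_ : n = 1%N) ?mulr1n //; apply/eqP; rewrite eqn_leq n_le1.
have pq := pdiv_prime n_gt1.
have [e [De ->]] := divq _ d pq Dd.
have [||f [Df ->]] := IHn (n %/ pdiv n)%N _ e De.
- by rewrite ltn_Pdiv // prime_gt1.
- by rewrite divn_gt0 ?prime_gt0 // dvdn_leq // pdiv_dvd.
by exists f; rewrite -mulrnA divnK // pdiv_dvd.
Qed.

Lemma pn_part_p_divisible_dvd (A : zmodType) (p N k : nat) :
  pn_part_p_divisible A p N -> (p ^ N %| k)%N ->
  forall a : A, exists b, a *+ k = b *+ k *+ p.
Proof.
move=> pnP /dvdnP [l ->] a; have [b Eb] := pnP a.
by exists b; rewrite mulnC !mulrnA Eb -!mulrnA [in RHS]mulnAC mulnA.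
Qed.

Lemma almost_divisible_mul_divisible (A : zmodType) : almost_divisible A ->
  exists2 m, (0 < m)%N & divisible_within (fun x : A => exists a, x = a *+ m).
Proof.
move=> [[s sP] finA].
have NP p : exists n, prime p -> pn_part_p_divisible A p n.
  have [pp|_] := boolP (prime p); last by exists 0%N.
  by have [n Hn] := finA p pp; exists n.
have [N {}NP] := choice NP.
set ps := undup [seq q <- s | prime q].
have mem_ps q : (q \in ps) = prime q && (q \in s) by rewrite mem_undup mem_filter.
pose m := (\prod_(q <- ps) q ^ N q)%N.
exists m.
  rewrite /m big_seq prodn_cond_gt0 // => q; rewrite mem_ps => /andP[pq _].
  by rewrite expn_gt0 prime_gt0.
apply: divisible_within_of_prime => q _ pq [a ->].
have [qs|qNs] := boolP (q \in ps).
  have dvdq : (q ^ N q %| m)%N.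
    by rewrite /m (bigD1_seq q qs (undup_uniq _)) dvdn_mulr.
  have [b Eb] := pn_part_p_divisible_dvd (NP q pq) dvdq a.
  by exists (b *+ m); split => //; exists b.
have [qdiv|qNdiv] := pselect (p_divisible A q); last first.
  by move: qNs; rewrite mem_ps pq (sP q pq qNdiv).
have [c ->] := qdiv a.
exists (c *+ m); split; first by exists c.
by rewrite -!mulrnA mulnC.
Qed.

Definition sumset (A : zmodType) (S T : A -> Prop) (x : A) : Prop :=
  exists s t, S s /\ T t /\ x = s + t.

Lemma sumset_subgroup (A : zmodType) (S T : A -> Prop) :
  subgroup S -> subgroup T -> subgroup (sumset S T).
Proof.
move=> sS sT; split; first by exists 0, 0; rewrite addr0; do !split; apply: subgroup0.
move=> _ _ [s [t [Ss [Tt ->]]]] [s' [t' [Ss' [Tt' ->]]]].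
exists (s - s'), (t - t'); rewrite opprD addrACA.
by split; [apply: subgroupB|split => //; apply: subgroupB].
Qed.

Section DivisibleSummand.
Local Open Scope classical_set_scope.
Variables (A : zmodType) (D : A -> Prop).
Hypotheses (sD : subgroup D) (divD : divisible_within D).
Implicit Types (B : set A) (a : A).

(* Not required to contain 0, so that the union of the empty chain qualifies in Zorn's
   lemma. *)
Definition disjoint_sub_closed B :=
  (forall x y, B x -> B y -> B (x - y)) /\ (forall x, D x -> B x -> x = 0).

Lemma disjoint_sub_closed_extension B a : subgroup B ->
  (forall x, D x -> B x -> x = 0) ->
  (forall j, sumset D B (a *~ j) -> B (a *~ j)) ->
  disjoint_sub_closed (fun y => exists b j, B b /\ y = b + a *~ j).
Proof.
move=> sB disjB pure; split.
  move=> _ _ [b [j [Bb ->]]] [b' [j' [Bb' ->]]].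
  exists (b - b'), (j - j'); rewrite mulrzBr opprD addrACA.
  by split => //; apply: subgroupB.
move=> x Dx [b [j [Bb Ex]]]; apply: disjB => //.
have DBj : sumset D B (a *~ j).
  exists x, (- b); split => //; split; first exact: subgroupN.
  by rewrite Ex addrAC subrr add0r.
by rewrite Ex; apply: subgroupD => //; apply: pure.
Qed.

Lemma prime_torsion_pure B a (q : nat) : subgroup B -> prime q ->
  ~ sumset D B a -> B (a *+ q) ->
  forall j, sumset D B (a *~ j) -> B (a *~ j).
Proof.
move=> sB pq DBa Baq j DBj; have sDB := sumset_subgroup sD sB.
have [/dvdzP[i ->]|qNj] := boolP (q %| j)%Z.
  by rewrite mulrC mulrzA -pmulrn; apply: (subgroupMz sB).
have /eqP gcd1 : coprime q `|j| by rewrite prime_coprime.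
have [u [v Euv]] := Bezoutz j q.
have g1 : gcdz j q = 1 by rewrite /gcdz absz_nat gcdnC gcd1.
case: DBa; rewrite -[a]mulr1z -g1 -Euv mulrzDr (mulrC u) (mulrC v) !mulrzA -pmulrn.
apply: subgroupD => //; apply: subgroupMz => //.
by exists 0, (a *+ q); rewrite add0r; split; first by apply: subgroup0.
Qed.

Lemma least_multiple_step B a k : subgroup B -> ~ sumset D B a ->
  (0 < k)%N -> sumset D B (a *+ k) ->
  exists a' (q : nat), [/\ prime q, ~ sumset D B a' & B (a' *+ q)].
Proof.
move=> sB DBa k_gt0 DBk.
pose inDB k := `[< (0 < k)%N /\ sumset D B (a *+ k) >].
have: exists k, inDB k by exists k; apply/asboolP.
case/ex_minnP => {k k_gt0 DBk} k /asboolP[k_gt0 [d [b [Dd [Bb Ek]]]]] kmin.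
have k_gt1 : (1 < k)%N.
  by rewrite ltn_neqAle eq_sym k_gt0 andbT; apply: contra_notN DBa => /eqP k1;
    rewrite -[a]mulr1n -k1; exists d, b.
pose q := pdiv k; pose k' := (k %/ q)%N.
have pq : prime q := pdiv_prime k_gt1.
have [d' [Dd' Ed]] := divD Dd (prime_gt0 pq).
exists (a *+ k' - d'), q; split => //.
  move=> [d'' [b'' [Dd'' [Bb'' Ea]]]].
  have /kmin : inDB k'.
    apply/asboolP; split; first by rewrite divn_gt0 ?prime_gt0 // dvdn_leq // pdiv_dvd.
    exists (d'' + d'), b''; split; first by apply: subgroupD.
    by split => //; rewrite addrAC -Ea subrK.
  by rewrite leqNgt ltn_Pdiv // prime_gt1.
by rewrite mulrnBl -mulrnA divnK ?pdiv_dvd // Ek -Ed addrAC subrr add0r.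
Qed.

Lemma pure_outside_sumset B a : subgroup B -> ~ sumset D B a ->
  exists a', ~ sumset D B a' /\ forall j, sumset D B (a' *~ j) -> B (a' *~ j).
Proof.
move=> sB DBa; have sDB := sumset_subgroup sD sB.
have [[k [k_gt0 DBk]]|noDB] := pselect (exists k, (0 < k)%N /\ sumset D B (a *+ k)).
  have [a' [q [pq DBa' Ba'q]]] := least_multiple_step sB DBa k_gt0 DBk.
  by exists a'; split => //; apply: prime_torsion_pure pq DBa' Ba'q.
exists a; split => // j DBj.
have [->|j_neq0] := eqVneq j 0; first by rewrite mulr0z; apply: subgroup0.
case: noDB; exists `|j|%N; split; first by rewrite absz_gt0.
by rewrite pmulrn abszEsg mulrC mulrzA; apply: subgroupMz.
Qed.

Lemma divisible_summand : exists B, [/\ subgroup B,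
  forall x, D x -> B x -> x = 0 & forall a, sumset D B a].
Proof.
have [B [[subB disjB] maxB]] :
    exists B, disjoint_sub_closed B /\ forall B', B `<` B' -> ~ disjoint_sub_closed B'.
  apply: Zorn_bigcup => F FP totF; split; last first.
    by move=> x Dx [X FX Xx]; apply: (FP X FX).2.
  move=> x y [X FX Xx] [Y FY Yy].
  have [XY|YX] := totF X Y FX FY.
    by exists Y => //; apply: (FP Y FY).1 => //; apply: XY.
  by exists X => //; apply: (FP X FX).1 => //; apply: YX.
have B0 : B 0.
  apply: contrapT => NB0; apply: (maxB [set 0]).
    split; first by move=> x Bx; case: NB0; rewrite -(subrr x); apply: subB.
    by move=> /(_ 0 erefl).
  by split; [move=> x y -> ->; rewrite subr0 | move=> x _ ->].
have sB : subgroup B by [].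
exists B; split => // a; apply: contrapT => DBa.
have [a' [DBa' pure]] := pure_outside_sumset sB DBa.
apply: (maxB _ _ (disjoint_sub_closed_extension sB disjB pure)).
split; first by move=> y By; exists y, 0; rewrite mulr0z addr0.
move=> /(_ a') Ba'; apply: DBa'; exists 0, a'; rewrite add0r; split; first exact: subgroup0.
by split => //; apply: Ba'; exists 0, 1; rewrite mulr1z add0r.
Qed.

End DivisibleSummand.

Lemma divisible_plus_bounded_of_almost_divisible (A : zmodType) :
  almost_divisible A -> divisible_plus_bounded A.
Proof.
case/almost_divisible_mul_divisible => m m_gt0 divD.
pose D (x : A) := exists a, x = a *+ m.
have sD : subgroup D.
  split; first by exists 0; rewrite mul0rn.
  by move=> _ _ [a ->] [b ->]; exists (a - b); rewrite mulrnBl.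
have [B [sB disj dec]] := divisible_summand sD divD.
exists D, B; do 4?split => //.
exists m; split => // b Bb; apply: disj; first by exists b.
exact: subgroupMn.
Qed.

Section IntegerMatrixSystems.
Variable A : zmodType.

Definition mx_apply k n (M : 'M[int]_(k, n)) (X : 'I_n -> A) : 'I_k -> A :=
  fun i => \sum_(t < n) X t *~ M i t.

Lemma mx_applyM k n p (M : 'M[int]_(k, n)) (N : 'M[int]_(n, p)) X :
  mx_apply (M *m N) X = mx_apply M (mx_apply N X).
Proof.
apply: funext => i; rewrite /mx_apply.
under eq_bigr => t _ do rewrite mxE mulrz_sumr.
rewrite exchange_big /=; apply: eq_bigr => s _.
rewrite mulrz_suml; apply: eq_bigr => t _.
by rewrite -mulrzA mulrC.
Qed.

Lemma mx_apply1 n (X : 'I_n -> A) : mx_apply 1%:M X = X.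
Proof.
apply: funext => i; rewrite /mx_apply (bigD1 i) //= big1 ?addr0.
  by rewrite mxE eqxx mulr1z.
by move=> t ti; rewrite mxE eq_sym (negbTE ti) mulr0z.
Qed.

Lemma diag_system_solvable k n (d : seq int) (b : 'I_k -> A) :
  (forall i : 'I_k, if (i < n)%N then divisible_by `|d`_i| (b i) else b i = 0) ->
  exists Y, mx_apply (\matrix_(i < k, j < n) (d`_i *+ (i == j :> nat))) Y = b.
Proof.
move=> bP.
have zP (i : 'I_k) : exists z, (i < n)%N -> b i = z *+ `|d`_i|.
  by move: (bP i); case: ifP => _; [case=> z ->; exists z | exists 0].
have [z {}zP] := choice zP.
exists (fun t => \sum_(i < k | i == t :> nat) z i *~ sgz d`_i).
apply: funext => i; rewrite /mx_apply.
have [i_lt_n|i_ge_n] := ltnP i n; last first.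
  move: (bP i); rewrite ltnNge i_ge_n => -> /=.
  rewrite big1 // => t _; rewrite mxE eqn_leq leqNgt (leq_trans (ltn_ord t) i_ge_n).
  by rewrite mulr0n mulr0z.
rewrite (bigD1 (Ordinal i_lt_n)) //= [X in _ + X]big1 ?addr0; last first.
  move=> t /eqP t_neq_i; rewrite mxE (_ : (i == t :> nat) = false) ?mulr0n ?mulr0z //.
  by apply/eqP => it; apply: t_neq_i; apply: val_inj.
rewrite mxE eqxx mulr1n (big_pred1 i) /=; last by move=> i'.
by rewrite -mulrzA -abszEsg -pmulrn zP.
Qed.

Definition mx_solvability_condition k n (M : 'M[int]_(k, n)) (a : 'I_k -> A) :=
  forall (u : 'I_k -> int) (d : nat),
    (forall t, (d%:Z %| \sum_i u i * M i t)%Z) ->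
    divisible_by d (\sum_i a i *~ u i).

Lemma mx_system_solvable k n (M : 'M[int]_(k, n)) (a : 'I_k -> A) :
  mx_solvability_condition M a -> exists X, mx_apply M X = a.
Proof.
move=> Ma.
have [L Lu [R Ru [d _ EM]]] := int_Smith_normal_form M.
set Dl := \matrix_(i, j) _ in EM.
pose b := mx_apply (invmx L) a.
have LM : invmx L *m M = Dl *m R by rewrite EM !mulmxA mulVmx // mul1mx.
have [|Y EY] := @diag_system_solvable k n d b.
  move=> i; have := Ma (fun l => invmx L i l) (absz (if (i < n)%N then d`_i else 0)).
  have comb t : \sum_l invmx L i l * M l t = \sum_(j < n) d`_i *+ (i == j :> nat) * R j t.
    have := congr1 (fun N : 'M[int]_(k, n) => N i t) LM; rewrite !mxE => ->.
    by apply: eq_bigr => j _; rewrite mxE.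
  have -> : \sum_l a l *~ invmx L i l = b i by [].
  case: ifP => [i_lt_n|i_ge_n] divb.
    apply: divb => t; rewrite comb (bigD1 (Ordinal i_lt_n)) //= big1.
      by rewrite addr0 /= eqxx mulr1n dvdz_mulr // unfold_in /dvdz /= dvdnn.
    move=> j /eqP j_neq_i; rewrite (_ : (i == j :> nat) = false) ?mulr0n ?mul0r //.
    by apply/eqP => ij; apply: j_neq_i; apply: val_inj.
  have [t|z ->] := divb; last by rewrite mulr0n.
  rewrite comb big1 ?dvdz0 // => j _.
  rewrite (_ : (i == j :> nat) = false) ?mulr0n ?mul0r //.
  by apply: contraFF i_ge_n => /eqP ->.
exists (mx_apply (invmx R) Y).
by rewrite EM !mx_applyM -(mx_applyM R) mulmxV // mx_apply1 EY -mx_applyM mulmxV // mx_apply1.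
Qed.

End IntegerMatrixSystems.

Section FiniteSystems.
Variables (A : zmodType) (J : Type).
Local Notation JT := {classic J}.

Definition eval_row (r : seq (J * int)) (x : J -> A) : A := \sum_(c <- r) x c.1 *~ c.2.

Definition row_coef (r : seq (J * int)) (v : JT) : int :=
  \sum_(c <- r | (c.1 : JT) == v) c.2.

Lemma eval_row_coef (vs : seq JT) (r : seq (J * int)) (x : J -> A) :
  uniq vs -> all (fun c => (c.1 : JT) \in vs) r ->
  eval_row r x =
    \sum_(t < size vs) x (tnth (in_tuple vs) t) *~ row_coef r (tnth (in_tuple vs) t).
Proof.
move=> uvs; elim: r => [|c r IHr] /=.
  by move=> _; rewrite /eval_row big_nil big1 // => t _; rewrite /row_coef big_nil mulr0z.
move=> /andP[c_in r_in]; rewrite /eval_row big_cons -/(eval_row r x) IHr //.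
have coef_cons v : row_coef (c :: r) v = (if (c.1 : JT) == v then c.2 else 0) + row_coef r v.
  by rewrite /row_coef big_cons; case: ifP; rewrite ?add0r.
under eq_bigr => t _ do rewrite coef_cons mulrzDr.
rewrite big_split /=; congr (_ + _).
have c_idx : (index (c.1 : JT) vs < size vs)%N by rewrite index_mem.
have tnth_c : tnth (in_tuple vs) (Ordinal c_idx) = (c.1 : JT).
  by rewrite (tnth_nth (c.1 : JT)) /= nth_index.
rewrite (bigD1 (Ordinal c_idx)) //= big1 ?addr0; first by rewrite tnth_c eqxx.
move=> t t_neq; case: eqP => [E|_]; last by rewrite mulr0z.
case/negP: t_neq; apply/eqP/(tuple_uniqP (in_tuple vs) uvs).
by rewrite -E tnth_c.
Qed.

Lemma finite_system_solvable k (rows : 'I_k -> seq (J * int)) (b : 'I_k -> A) :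
  (forall (u : 'I_k -> int) (d : nat),
     (forall x : J -> A, divisible_by d (\sum_i eval_row (rows i) x *~ u i)) ->
     divisible_by d (\sum_i b i *~ u i)) ->
  exists x : J -> A, forall i, eval_row (rows i) x = b i.
Proof.
move=> rbP.
pose vs : seq JT := undup (flatten [seq [seq (c.1 : JT) | c <- rows i] | i <- enum 'I_k]).
pose v := tnth (in_tuple vs).
have uvs : uniq vs := undup_uniq _.
have vs_rows i : all (fun c => (c.1 : JT) \in vs) (rows i).
  rewrite -(@all_map _ _ (fun c => (c.1 : JT)) (fun w => w \in vs)).
  apply/allP => w w_in; rewrite mem_undup; apply/flattenP.
  by exists [seq (c.1 : JT) | c <- rows i] => //; apply/mapP; exists i; rewrite ?mem_enum.
pose M : 'M[int]_(k, size vs) := \matrix_(i, t) row_coef (rows i) (v t).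
have [|X MX] := @mx_system_solvable A _ _ M b.
  move=> u d dvd_uM; apply: rbP => x.
  pose w t := ((\sum_i u i * M i t) %/ d)%Z.
  have Ew t : \sum_i u i * M i t = w t * d by rewrite divzK.
  exists (\sum_t x (v t) *~ w t).
  under eq_bigr => i _ do rewrite (eval_row_coef x uvs (vs_rows i)) mulrz_suml.
  rewrite exchange_big -sumrMnl; apply: eq_bigr => t _ /=.
  under eq_bigr => i _ do rewrite -mulrzA.
  rewrite -mulrz_sumr (_ : \sum_i _ = w t * d) ?mulrzA ?pmulrn //.
  by rewrite -Ew; apply: eq_bigr => i _; rewrite mxE mulrC.
pose x (j : J) := if insub (index (j : JT) vs) is Some t then X t else 0.
have xX t : x (v t) = X t.
  rewrite /x (_ : index (v t) vs = t); last by rewrite /v (tnth_nth (v t)) index_uniq.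
  by case: insubP => [t' _ Et'|]; [congr X; apply: val_inj | rewrite ltn_ord].
exists x => i; rewrite (eval_row_coef x uvs (vs_rows i)) -MX.
by apply: eq_bigr => t _; rewrite xX mxE.
Qed.

End FiniteSystems.

Lemma In_cat (T : Type) (q : T) s1 s2 :
  List.In q (s1 ++ s2) <-> List.In q s1 \/ List.In q s2.
Proof. by elim: s1 => [|x s1 IHs] /=; [split; [right|case] | rewrite IHs; tauto]. Qed.

Lemma In_mem (T : eqType) (x : T) s : x \in s -> List.In x s.
Proof. by elim: s => //= y s IHs; rewrite inE => /orP[/eqP ->|/IHs]; [left|right]. Qed.

Lemma In_map (S T : Type) (f : S -> T) (s : seq S) x :
  List.In x s -> List.In (f x) (map f s).
Proof. by elim: s => //= y s IHs [->|/IHs]; [left|right]. Qed.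

Lemma In_mapP (S T : Type) (f : S -> T) (s : seq S) c :
  List.In c (map f s) -> exists x, c = f x.
Proof. by elim: s => //= x s IHs [<-|/IHs]; [exists x|]. Qed.

Lemma In_nth (T : Type) (x0 : T) s i : (i < size s)%N -> List.In (nth x0 s i) s.
Proof. by elim: s i => //= x s IHs [|i] /=; [left | move=> /IHs; right]. Qed.

Lemma In_nthP (T : Type) (x0 : T) s q : List.In q s ->
  exists2 i, (i < size s)%N & nth x0 s i = q.
Proof. by elim: s => //= x s IHs [<-|/IHs[i Hi Ei]]; [exists 0%N | exists i.+1]. Qed.

Section DirectDecomposition.
Variables (A : zmodType) (D B : A -> Prop) (m : nat).
Hypotheses (sD : subgroup D) (sB : subgroup B) (divD : divisible_within D)
  (m_gt0 : (0 < m)%N) (bB : forall b, B b -> b *+ m = 0)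
  (disjDB : forall x, D x -> B x -> x = 0) (decA : forall a, sumset D B a).

Lemma decomposition_uniq d1 b1 d2 b2 : D d1 -> B b1 -> D d2 -> B b2 ->
  d1 + b1 = d2 + b2 -> d1 = d2 /\ b1 = b2.
Proof.
move=> Dd1 Bb1 Dd2 Bb2 E.
have Ed : d1 - d2 = b2 - b1 by rewrite -(addrK b1 d1) E addrAC [d2 + _]addrC addrK.
have /eqP : d1 - d2 = 0 by apply: disjDB; [apply: subgroupB | rewrite Ed; apply: subgroupB].
rewrite subr_eq0 => /eqP Ed1; split => //.
by apply/eqP; rewrite eq_sym -subr_eq0 -Ed Ed1 subrr.
Qed.

Let decA_pair a : exists p : A * A, [/\ D p.1, B p.2 & a = p.1 + p.2].
Proof. by have [d [b [Dd [Bb ->]]]] := decA a; exists (d, b). Qed.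

Definition projD a := (sval (cid (decA_pair a))).1.
Definition projB a := (sval (cid (decA_pair a))).2.

Lemma projP a : [/\ D (projD a), B (projB a) & a = projD a + projB a].
Proof. exact: svalP (cid (decA_pair a)). Qed.

Lemma projD_in a : D (projD a). Proof. by case: (projP a). Qed.
Lemma projB_in a : B (projB a). Proof. by case: (projP a). Qed.

Lemma proj_eq a d b : D d -> B b -> a = d + b -> projD a = d /\ projB a = b.
Proof.
move=> Dd Bb E; have [Da Ba Ea] := projP a.
by apply: decomposition_uniq => //; rewrite -Ea.
Qed.

Lemma proj_mulz x k : projD (x *~ k) = projD x *~ k /\ projB (x *~ k) = projB x *~ k.
Proof.
have [Dx Bx Ex] := projP x.
by apply: proj_eq; [apply: subgroupMz|apply: subgroupMz|rewrite {1}Ex mulrzDl].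
Qed.

Lemma projBD x y : projB (x + y) = projB x + projB y.
Proof.
have [Dx Bx Ex] := projP x; have [Dy By Ey] := projP y.
have E : x + y = (projD x + projD y) + (projB x + projB y).
  by rewrite {1}Ex {1}Ey addrACA.
by have [_ ->] := proj_eq (subgroupD sD Dx Dy) (subgroupD sB Bx By) E.
Qed.

Lemma projBMn x n : projB (x *+ n) = projB x *+ n.
Proof. by rewrite !pmulrn (proj_mulz x n).2. Qed.

Lemma projB_id y : B y -> projB y = y.
Proof.
by move=> By; have [_ ->] := proj_eq (subgroup0 sD) By (esym (add0r y)).
Qed.

Lemma projD0 : projD 0 = 0.
Proof.
by have [-> _] := proj_eq (subgroup0 sD) (subgroup0 sB) (esym (addr0 (0 : A))).
Qed.

Lemma divisible_by_gcdn d (y : A) : divisible_by d y -> divisible_by (gcdn d m) y.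
Proof.
by move=> [z ->]; exists (z *+ (d %/ gcdn d m)); rewrite -mulrnA divnK // dvdn_gcdl.
Qed.

Lemma divisible_by_projB d (y : A) : divisible_by d y -> divisible_by (gcdn d m) (projB y).
Proof. by move=> [z ->]; apply: divisible_by_gcdn; exists (projB z); rewrite projBMn. Qed.

Lemma divisible_by_gcdn_B d (y : A) : B y -> divisible_by (gcdn d m) y -> divisible_by d y.
Proof.
move=> By [z Ez]; have [u [v Euv]] := Bezoutz d m.
have Ey : y = projB z *+ gcdn d m by rewrite -projBMn -Ez projB_id.
exists (projB z *~ u); rewrite Ey pmulrn (_ : (gcdn d m)%:Z = gcdz d m) //.
rewrite -Euv mulrzDr (mulrC u) (mulrC v) !mulrzA -!pmulrn (bB (projB_in z)).
by rewrite mul0rz addr0 !pmulrn -!mulrzA mulrC.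
Qed.

Lemma B_mulz_mod (y : A) k k' : B y -> (k %% m)%Z = (k' %% m)%Z -> y *~ k = y *~ k'.
Proof.
move=> By Ek.
have ym0 (q : int) : y *~ (q * m%:Z) = 0 by rewrite mulrC mulrzA -pmulrn bB // mul0rz.
by rewrite (divz_eq k m) (divz_eq k' m) Ek !mulrzDr !ym0.
Qed.

Lemma projB_lin y k e : projB (y *~ k + e) = projB y *~ k + projB e.
Proof. by rewrite projBD (proj_mulz y k).2. Qed.

Lemma projB_transfer y0 y1 k e d k' e' d' :
  (k %% m)%Z = (k' %% m)%Z -> gcdn d m = gcdn d' m ->
  divisible_by d' (y0 *~ k' + e') -> divisible_by d' (y1 *~ k' + e') ->
  divisible_by d (y1 *~ k + e) ->
  divisible_by d (projB y0 *~ k + projB e).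
Proof.
move=> Ek Ed y0P' y1P' y1P.
have [By0 By1 Be] := And3 (projB_in y0) (projB_in y1) (projB_in e).
apply: divisible_by_gcdn_B; first by apply: subgroupD => //; apply: subgroupMz.
have -> : projB y0 *~ k + projB e =
    (projB y0 *~ k' + projB e') - (projB y1 *~ k' + projB e') + (projB y1 *~ k + projB e).
  rewrite (B_mulz_mod By0 Ek) (B_mulz_mod By1 Ek).
  by rewrite [projB y1 *~ k' + _]addrC addrKA addrA subrK.
rewrite -!projB_lin; apply: divisible_byD; last exact: divisible_by_projB.
by rewrite Ed; apply: divisible_byD; [|apply: divisible_byN]; apply: divisible_by_projB.
Qed.

(* [cond k e d] requires that d divide k y + e for the unknown y; for d = 0 this is
   the equation k y + e = 0. *)
Variable cond : int -> A -> nat -> Prop.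
Hypotheses
  (cond_sat : forall L : seq (int * A * nat),
     (forall c, List.In c L -> cond c.1.1 c.1.2 c.2) ->
     exists y, forall c, List.In c L -> divisible_by c.2 (y *~ c.1.1 + c.1.2))
  (cond_comb : forall k e k0 e0 (q : int),
     cond k e 0 -> cond k0 e0 0 -> cond (k - q * k0) (e - e0 *~ q) 0)
  (cond00 : cond 0 0 0).

Lemma cond_coef0 e : cond 0 e 0 -> e = 0.
Proof.
move=> Ce; have [|y /(_ _ (or_introl erefl))[z]] := cond_sat (L := [:: ((0 : int), e, 0%N)]).
  by move=> c [<-|].
by rewrite /= mulr0z add0r mulr0n.
Qed.

Lemma cond_generator k e : cond k e 0 -> k != 0 ->
  exists k0 e0, [/\ cond k0 e0 0, k0 != 0 &
    forall k e, cond k e 0 -> k = (k %/ k0)%Z * k0 /\ e = e0 *~ (k %/ k0)%Z].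
Proof.
move=> Cke k_neq0.
pose small n := `[< exists k e, [/\ cond k e 0, k != 0 & absz k = n] >].
have: exists n, small n by exists (absz k); apply/asboolP; exists k, e.
case/ex_minnP => _ /asboolP[k0 [e0 [Ck0 k0_neq0 <-]]] k0min.
exists k0, e0; split => // {Cke k_neq0 k e} k e Cke; set q := (k %/ k0)%Z.
have Er : k - q * k0 = (k %% k0)%Z by rewrite {1}(divz_eq k k0) addrAC subrr add0r.
have Cr : cond (k %% k0)%Z (e - e0 *~ q) 0 by rewrite -Er; apply: cond_comb.
have r0 : (k %% k0)%Z = 0.
  apply: contraTeq (ltz_mod k k0_neq0) => r_neq0.
  have : (`|k0| <= `|(k %% k0)%Z|)%N.
    by apply: k0min; apply/asboolP; exists (k %% k0)%Z, (e - e0 *~ q).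
  by rewrite -leNgt -(gez0_abs (modz_ge0 k k0_neq0)) lez_nat.
split; first by rewrite {1}(divz_eq k k0) r0 addr0.
by apply/eqP; rewrite -subr_eq0; apply/eqP/cond_coef0; rewrite -r0.
Qed.

Lemma cond_solvable_D : exists2 cD, D cD & forall k e, cond k e 0 -> cD *~ k + projD e = 0.
Proof.
have [[k [e [Cke k_neq0]]]|none] := pselect (exists k e, cond k e 0 /\ k != 0).
  have [k0 [e0 [Ck0 k0_neq0 gen]]] := cond_generator Cke k_neq0.
  have k0_gt0 : (0 < `|k0|)%N by rewrite absz_gt0.
  have [w [Dw Ew]] := divD (projD_in e0) k0_gt0.
  exists (- (w *~ sgz k0)); first by apply: subgroupN => //; apply: subgroupMz.
  move=> k' e' /gen[Ek ->]; rewrite {1}Ek; set q := (k' %/ k0)%Z.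
  rewrite (proj_mulz e0 q).1 Ew pmulrn abszEsg mulNrz -!mulrzA.
  by rewrite [q * k0]mulrC mulrA addNr.
exists 0; first exact: subgroup0.
move=> k e Cke; have k0 : k = 0 by apply: contrapT => /eqP k_neq0; apply: none; exists k, e.
by move: Cke; rewrite k0 => /cond_coef0 ->; rewrite mul0rz add0r projD0.
Qed.

Lemma cond_solvable_B :
  exists2 cB, B cB & forall k e d, cond k e d -> divisible_by d (cB *~ k + projB e).
Proof.
pose type (k : int) (d : nat) := ((k %% m)%Z, gcdn d m).
pose types := [seq (a%:Z, g) | a <- iota 0 m, g <- iota 0 m.+1].
have type_in k d : type k d \in types.
  have m_neq0 : m%:Z != 0 by rewrite eqz_nat -lt0n.
  rewrite /type -(gez0_abs (modz_ge0 k m_neq0)); apply: allpairs_f.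
    by rewrite mem_iota add0n -ltz_nat gez0_abs ?modz_ge0 ?ltz_mod.
  by rewrite mem_iota /= add0n ltnS dvdn_leq // dvdn_gcdr.
have repP tau : exists r : int * A * nat, cond r.1.1 r.1.2 r.2 /\
    ((exists k e d, cond k e d /\ type k d = tau) -> type r.1.1 r.2 = tau).
  have [[k [e [d [Cked Et]]]]|none] := pselect (exists k e d, cond k e d /\ type k d = tau).
    by exists (k, e, d).
  by exists (0, 0, 0%N); split => // ex; case: none.
have [rep {}repP] := choice repP.
have [|y0 y0P] := cond_sat (L := [seq rep tau | tau <- types]).
  by move=> c c_in; have [tau ->] := In_mapP c_in; case: (repP tau).
exists (projB y0); first exact: projB_in.
move=> k e d Cked; have [Crep] := repP (type k d).
move: (rep (type k d)) (In_map rep (In_mem (type_in k d))) Crep => [[k' e'] d'] repIn Crep.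
case/(_ (ex_intro _ k (ex_intro _ e (ex_intro _ d (conj Cked erefl))))) => Ek Ed.
have [|y1 y1P] := cond_sat (L := [:: (k, e, d); (k', e', d')]).
  by move=> c [<-|[<-|]].
apply: (projB_transfer (esym Ek) (esym Ed) (y0P _ repIn)).
  exact: (y1P _ (or_intror (or_introl erefl))).
exact: (y1P _ (or_introl erefl)).
Qed.

Lemma cond_solvable : exists c, forall k e d, cond k e d -> divisible_by d (c *~ k + e).
Proof.
have [cD DcD cDP] := cond_solvable_D; have [cB BcB cBP] := cond_solvable_B.
exists (cD + cB) => k e d Cked; have [De Be Ee] := projP e.
have -> : (cD + cB) *~ k + e = (cD *~ k + projD e) + (cB *~ k + projB e).
  by rewrite {1}Ee mulrzDl addrACA.
have [d0|d_gt0] := posnP d.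
  by move: Cked (cBP _ _ _ Cked); rewrite d0 => /cDP -> [z ->]; rewrite add0r; exists z.
apply: divisible_byD; last exact: cBP.
have DX : D (cD *~ k + projD e) by apply: subgroupD => //; apply: subgroupMz.
by have [z [_ ->]] := divD DX d_gt0; exists z.
Qed.

End DirectDecomposition.

Section EquationSystems.
Local Open Scope classical_set_scope.
Variables (A : zmodType) (J : Type).
Local Notation equation := (seq (J * int) * A)%type.

Definition satisfies (x : J -> A) (q : equation) : Prop := eval_row q.1 x = q.2.

Definition finitely_solvable (S : set equation) : Prop :=
  forall L : seq equation, (forall q, List.In q L -> S q) ->
  exists x, forall q, List.In q L -> satisfies x q.

Definition var_eq (j : J) (c : A) : equation := ([:: (j, 1)], c).

Lemma eval_var_eq j c (x : J -> A) : eval_row (var_eq j c).1 x = x j.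
Proof. by rewrite /eval_row big_cons big_nil addr0 mulr1z. Qed.

Lemma eval_row_ext (r : seq (J * int)) (x y : J -> A) :
  (forall c, List.In c r -> x c.1 = y c.1) -> eval_row r x = eval_row r y.
Proof.
rewrite /eval_row; elim: r => [|c r IHr] xy; first by rewrite !big_nil.
by rewrite !big_cons xy ?IHr //; [move=> c' Hc'; apply: xy; right | left].
Qed.

Lemma In_setU1 (S : set equation) (q0 : equation) (L : seq equation) :
  (forall q, List.In q L -> (S `|` [set q0]) q) ->
  exists2 L' : seq equation, (forall q, List.In q L' -> S q) &
    forall q, List.In q L -> q = q0 \/ List.In q L'.
Proof.
elim: L => [|q L IHL] LS; first by exists [::].
have [|L' L'S L'P] := IHL; first by move=> q' Hq'; apply: LS; right.
case: (LS q (or_introl erefl)) => [Sq|->].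
  by exists (q :: L') => [q' [<-|/L'S]|q' [<-|/L'P[]]] //; [right; left|left|right; right].
by exists L' => // q' [<-|/L'P]; [left|].
Qed.

Section Forcing.
Variables (T : set equation) (j : J).
Hypothesis fsT : finitely_solvable T.

Definition forced (k : int) (e : A) (d : nat) : Prop :=
  exists2 F : seq equation, (forall q, List.In q F -> T q) &
    forall x, (forall q, List.In q F -> satisfies x q) -> divisible_by d (x j *~ k + e).

Lemma forced_sat (L : seq (int * A * nat)) :
  (forall c, List.In c L -> forced c.1.1 c.1.2 c.2) ->
  exists y, forall c, List.In c L -> divisible_by c.2 (y *~ c.1.1 + c.1.2).
Proof.
move=> LP.
have [F FT FP] : exists2 F : seq equation, (forall q, List.In q F -> T q) &
    forall x, (forall q, List.In q F -> satisfies x q) ->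
    forall c, List.In c L -> divisible_by c.2 (x j *~ c.1.1 + c.1.2).
  elim: L LP => [|c L IHL] LP; first by exists [::].
  have [|F FT FP] := IHL; first by move=> c' Hc'; apply: LP; right.
  have [F1 F1T F1P] := LP c (or_introl erefl).
  exists (F1 ++ F) => [q /In_cat[]|x xF c' [<-|Hc']]; [exact: F1T|exact: FT| |].
    by apply: F1P => q Hq; apply: xF; apply/In_cat; left.
  by apply: FP => // q Hq; apply: xF; apply/In_cat; right.
have [x xF] := fsT FT.
by exists (x j); apply: FP.
Qed.

Lemma forced_comb k e k0 e0 (q : int) :
  forced k e 0 -> forced k0 e0 0 -> forced (k - q * k0) (e - e0 *~ q) 0.
Proof.
move=> [F1 F1T F1P] [F2 F2T F2P].
exists (F1 ++ F2) => [q' /In_cat[]|x xF]; [exact: F1T|exact: F2T|].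
have [z1 E1] := F1P x (fun q' Hq => xF q' (proj2 (In_cat _ _ _) (or_introl Hq))).
have [z2 E2] := F2P x (fun q' Hq => xF q' (proj2 (In_cat _ _ _) (or_intror Hq))).
exists 0; rewrite mulr0n; move: E1 E2; rewrite !mulr0n => E1 E2.
have -> : x j *~ (k - q * k0) + (e - e0 *~ q) = (x j *~ k + e) - (x j *~ k0 + e0) *~ q.
  by rewrite mulrzBr mulrzDl [q * k0]mulrC mulrzA opprD addrACA.
by rewrite E1 E2 mul0rz subrr.
Qed.

Lemma forced00 : forced 0 0 0.
Proof. by exists [::] => // x _; exists 0; rewrite mulr0z addr0. Qed.

Lemma finitely_solvable_var_eq c :
  (forall k e d, forced k e d -> divisible_by d (c *~ k + e)) ->
  finitely_solvable (T `|` [set var_eq j c]).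
Proof.
move=> cP L LP; have [L' L'T L'P] := In_setU1 LP.
pose G := var_eq j c :: L'; pose eq0 : equation := ([::], 0).
have [|x xG] := finite_system_solvable (rows := fun i : 'I_(size G) => (nth eq0 G i).1)
                                       (b := fun i : 'I_(size G) => (nth eq0 G i).2).
  move=> u d dP; rewrite big_ord_recl.
  apply: cP; exists L' => // x xL'; have [z Ez] := dP x; exists z.
  rewrite -Ez big_ord_recl eval_var_eq; congr (_ + _); apply: eq_bigr => i _.
  by rewrite /= add0n xL' //; apply: In_nth.
exists x => q /L'P[->|/(In_nthP eq0)[i i_lt Ei]]; first exact: (xG ord0).
by rewrite -Ei; exact: (xG (lift ord0 (Ordinal i_lt))).
Qed.

End Forcing.

Lemma finitely_solvable_family (I : Type) (rows : I -> seq (J * int)) (rhs : I -> A) :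
  (forall F : seq I, exists x, forall i, List.In i F -> satisfies x (rows i, rhs i)) ->
  finitely_solvable (fun q => exists i, q = (rows i, rhs i)).
Proof.
move=> fs L LS.
have [F FP] : exists F : seq I,
    forall q, List.In q L -> exists2 i, List.In i F & q = (rows i, rhs i).
  elim: L LS => [|q L IHL] LS; first by exists [::].
  have [|F FP] := IHL; first by move=> q' Hq'; apply: LS; right.
  have [i ->] := LS q (or_introl erefl).
  by exists (i :: F) => q' [<-|/FP[i' Hi' ->]]; [exists i; first left|exists i'; first right].
by have [x xF] := fs F; exists x => q /FP[i /xF xi ->].
Qed.

Lemma In_chain (F : set (set equation)) (S : set equation) (L : seq equation) :
  total_on F subset -> (forall q, List.In q L -> ((\bigcup_(X in F) X) `|` S) q) ->
  (forall q, List.In q L -> S q) \/ exists2 X, F X & forall q, List.In q L -> (X `|` S) q.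
Proof.
move=> totF; elim: L => [|q L IHL] LP; first by left.
have [|LS|[X FX LX]] := IHL; first by move=> q' Hq'; apply: LP; right.
  case: (LP q (or_introl erefl)) => [[X FX Xq]|Sq]; last by left => q' [<-|/LS].
  by right; exists X => // q' [<-|/LS]; [left|right].
right; case: (LP q (or_introl erefl)) => [[Y FY Yq]|Sq]; last first.
  by exists X => // q' [<-|/LX]; [right|].
have [XY|YX] := totF X Y FX FY.
  by exists Y => // q' [<-|/LX[/XY|]]; [left|left|right].
by exists X => // q' [<-|/LX]; [left; apply: YX|].
Qed.

Lemma maximal_finitely_solvable (S0 : set equation) : finitely_solvable S0 ->
  exists2 T, S0 `<=` T /\ finitely_solvable T &
    forall q, finitely_solvable (T `|` [set q]) -> T q.
Proof.
move=> fsS0.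
have [X [fsX maxX]] : exists X, finitely_solvable (X `|` S0) /\
    forall Y, X `<` Y -> ~ finitely_solvable (Y `|` S0).
  apply: Zorn_bigcup => F FP totF L /(In_chain totF)[LS0|[X FX LX]].
    by apply: fsS0.
  exact: FP FX L LX.
exists (X `|` S0) => [|q fsq]; first by split => // q; right.
apply: contrapT => Nq; apply: (maxX (X `|` [set q])).
  by split=> [y|/(_ q)]; [left|apply: contra_not Nq => Xq; left; apply: Xq; right].
move=> L LP; apply: fsq => q' /LP.
by case=> [[|->]|]; [left; left|right|left; right].
Qed.

Lemma solvable_of_extension (I : Type) (rows : I -> seq (J * int)) (rhs : I -> A) :
  (forall (T : set equation) j, finitely_solvable T ->
     exists c, finitely_solvable (T `|` [set var_eq j c])) ->
  (forall F : seq I, exists x, forall i, List.In i F -> satisfies x (rows i, rhs i)) ->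
  exists x, forall i, satisfies x (rows i, rhs i).
Proof.
move=> ext fs.
have [T [S0T fsT] maxT] := maximal_finitely_solvable (finitely_solvable_family fs).
have cP j : exists c, T (var_eq j c).
  by have [c fsc] := ext T j fsT; exists c; apply: maxT.
have [c cT] := choice cP; exists c => i.
pose L := (rows i, rhs i) :: [seq var_eq v.1 (c v.1) | v <- rows i].
have [|x xL] := fsT L.
  move=> q [<-|q_in]; first by apply: S0T; exists i.
  by have [v ->] := In_mapP q_in.
rewrite /satisfies -(xL _ (or_introl erefl)); apply: eval_row_ext => v v_in.
have := xL (var_eq v.1 (c v.1)); rewrite /satisfies eval_var_eq => -> //.
by right; apply: (In_map (fun v => var_eq v.1 (c v.1))).
Qed.

End EquationSystems.

Lemma algebraically_compact_of_divisible_plus_bounded (A : zmodType) :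
  divisible_plus_bounded A -> algebraically_compact A.
Proof.
move=> [D [B [sD [sB [divD [[m [m_gt0 bB]] [disjDB decA]]]]]]] I J rows rhs.
apply: solvable_of_extension => T j fsT.
have [c cP] := cond_solvable sD sB divD m_gt0 bB disjDB decA
  (forced_sat fsT) (@forced_comb _ _ T j) (forced00 T j).
by exists c; apply: finitely_solvable_var_eq.
Qed.

Theorem mainTheorem4 (A : zmodType) :
  (almost_divisible A <-> divisible_plus_bounded A) /\
  (almost_divisible A -> algebraically_compact A).
Proof.
split; first split.
- exact: divisible_plus_bounded_of_almost_divisible.
- exact: almost_divisible_of_divisible_plus_bounded.
move=> /divisible_plus_bounded_of_almost_divisible.
exact: algebraically_compact_of_divisible_plus_bounded.
Qed.
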